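(* For any choice of the almost disjoint family and enumeration in its definition, $[0,1]\notin\mathrm{FinBW}(\rho^{[0,1]})$.
   Context: $\mathrm{conv}$ is the ideal on $\mathbb{Q}\cap[0,1]$ of all sets covered by the ranges of finitely many sequences in $\mathbb{Q}\cap[0,1]$ convergent in $[0,1]$. Definition of $\rho^{[0,1]}$: let $\mathcal{A}=\{A_\alpha:\alpha<\mathfrak{c}\}$ be an almost disjoint family on $\omega$ (pairwise distinct infinite subsets with pairwise finite intersections). Let $X$ be the set of all $x\colon\omega\times\omega\to[0,1]\cap\mathbb{Q}$ such that: (i) for every $p\in[0,1]$ there is an open neighborhood $U$ of $p$ with $x[(\omega\setminus[0,n])\times\omega]\not\subseteq U$ for all $n$; (ii) $x$ is injective; (iii) $x[(\omega\setminus[0,n])\times\omega]\notin\mathrm{conv}$ for all $n$. Fix an enumeration $X=\{x_\alpha:\alpha<\mathfrak{c}\}$. Let $\overline{\mathcal{A}}=\{A\setminus K:A\in\mathcal{A},K\in[\omega]^{<\omega}\}$ and $\rho^{[0,1]}\colon\overline{\mathcal{A}}\to[[0,1]\cap\mathbb{Q}]^\omega$, $\rho^{[0,1]}(A_\alpha\setminus K)=x_\alpha[(\omega\setminus[0,\max(A_\alpha\cap K)])\times\omega]$, with $\max\emptyset=0$; here $[0,m]=\{0,\dots,m\}$. (This is a partition regular function.) For a function $\rho\colon\mathcal{F}\to[\Lambda]^\omega$ with $\mathcal{F}\subseteq[\Omega]^\omega$ and a Hausdorff space $Y$: for $f\colon\Lambda\to Y$ and $F\in\mathcal{F}$, $f\restriction\rho(F)$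 $\rho$-converges to $y$ if for every neighborhood $U$ of $y$ some finite $K\subseteq\Omega$ has $f[\rho(F\setminus K)]\subseteq U$; $\mathrm{FinBW}(\rho)$ is the class of spaces $Y$ such that for every $f\colon\Lambda\to Y$ some $F\in\mathcal{F}$ makes $f\restriction\rho(F)$ $\rho$-convergent to a point of $Y$. *)

From HB Require Import structures.
From mathcomp Require Import all_boot all_order all_algebra.
From mathcomp Require Import all_classical all_reals all_analysis.
Set Implicit Arguments. Unset Strict Implicit. Unset Printing Implicit Defensive.
Import Order.TTheory GRing.Theory Num.Theory.
Import numFieldNormedType.Exports.
Local Open Scope classical_set_scope.
Local Open Scope ring_scope.

(* The space Y is given as a subset S of a topological type Y0 with the
   subspace topology: a neighbourhood of y in S is any U containing V `&` S
   for some neighbourhood V of y in Y0. *)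
Definition subnbhs (Y0 : topologicalType) (S : set Y0) (y : Y0) (U : set Y0) : Prop :=
  exists V, nbhs y V /\ V `&` S `<=` U.

Definition rho_converges (Om La : Type) (Y0 : topologicalType) (S : set Y0)
  (rho : set Om -> set La) (f : La -> Y0) (F : set Om) (y : Y0) : Prop :=
  forall U, subnbhs S y U ->
    exists K : set Om, finite_set K /\ f @` (rho (F `\` K)) `<=` U.

Definition FinBW (Om La : Type) (Y0 : topologicalType) (S : set Y0)
  (Fam : set (set Om)) (rho : set Om -> set La) : Prop :=
  forall f : La -> Y0, range f `<=` S ->
    exists F, Fam F /\ exists y, S y /\ rho_converges S rho f F y.

Definition QI : Type := {q : rat | (0 <= q) && (q <= 1)}.

Definition QItoR (R : realType) (q : QI) : R := ratr (sval q).

Definition conv (R : realType) : set (set QI) :=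
  [set B | exists (n : nat) (s : nat -> nat -> QI),
      (forall i, (i < n)%N ->
         exists l : R, 0 <= l <= 1 /\ (fun k => QItoR R (s i k)) @ \oo --> l)
      /\ B `<=` \bigcup_(i in [set i | (i < n)%N]) range (s i)].

Definition tailset (n : nat) : set (nat * nat) := [set ij | (n < ij.1)%N].

Definition Xset (R : realType) : set (nat * nat -> QI) :=
  [set x |
    (forall p : R, 0 <= p <= 1 ->
       exists U : set R, (exists V : set R, open V /\ U = V `&` `[0, 1]) /\ U p /\
         forall n, ~ ((QItoR R \o x) @` tailset n `<=` U))
    /\ injective x
    /\ (forall n, ~ conv R (x @` tailset n))].

(* almost disjoint family indexed by a set of size continuum (here: R) *)
Definition almost_disjoint (I : Type) (A : I -> set nat) : Prop :=
  injective A /\ (forall a, infinite_set (A a)) /\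
  (forall a b, a <> b -> finite_set (A a `&` A b)).

(* max of a finite set of naturals, max set0 = 0 *)
Definition maxfin (K : set nat) : nat := \max_(k <- finmap.enum_fset (fset_set K)) k.

Definition Abar (I : Type) (A : I -> set nat) : set (set nat) :=
  [set F | exists a K, finite_set K /\ F = A a `\` K].

(* rho^{[0,1]}(A_a \ K) = x_a[(omega \ [0, max(A_a cap K)]) x omega].
   Written as the union over all representations F = A_a \ K, which (for an
   almost disjoint family) has exactly one value; empty outside Abar. *)
Definition rho01 (I : Type) (A : I -> set nat) (x : I -> nat * nat -> QI)
  (F : set nat) : set QI :=
  \bigcup_(p in [set p : I * set nat | finite_set p.2 /\ F = A p.1 `\` p.2])
     (x p.1 @` tailset (maxfin (A p.1 `&` p.2))).

From HB Require Import structures.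
From mathcomp Require Import all_boot all_order all_algebra.
From mathcomp Require Import all_classical all_reals all_analysis.
Import Order.TTheory GRing.Theory Num.Theory.
Import numFieldNormedType.Exports.
Local Open Scope classical_set_scope.
Local Open Scope ring_scope.

(* The inclusion of Q ∩ [0,1] into [0,1] has no ρ-convergent restriction:
   the set ρ((A_a \ K) \ K') still contains x_a[(ω \ [0,n]) × ω] for some n,
   and condition (i) in the definition of X says that no such tail of x_a is
   contained in a fixed neighbourhood of any point of [0,1]. *)

Lemma QItoR_itv01 (R : realType) (q : QI) : QItoR R q \in `[0, 1].
Proof.
case: q => q qP; have /andP[q0 q1] := qP; rewrite in_itv /= /QItoR /=.
by rewrite ler0q q0 -(rmorph1 (@ratr R)) ler_rat.
Qed.

Lemma Xset_tail_not_subnbhs (R : realType) (z : nat * nat -> QI) (y : R) :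
  Xset R z -> y \in `[0, 1] ->
  exists U, subnbhs (Y0 := R) `[0, 1] y U /\
    forall n, ~ (QItoR R \o z) @` tailset n `<=` U.
Proof.
move=> [tail_escapes _] y01.
have [U [[V [oV ->]] [[Vy _] notsub]]] := tail_escapes y y01.
exists (V `&` `[0, 1]); split => //.
by exists V; split => //; apply: open_nbhs_nbhs.
Qed.

Lemma rho01_setD (I : Type) (A : I -> set nat) (x : I -> nat * nat -> QI)
    (a : I) (K : set nat) :
  finite_set K -> x a @` tailset (maxfin (A a `&` K)) `<=` rho01 A x (A a `\` K).
Proof. by move=> fK q xq; exists (a, K). Qed.

Theorem lemma6p5 (R : realType) (A : R -> set nat) (x : R -> nat * nat -> QI) :
  almost_disjoint A ->
  range x = Xset R ->
  ~ FinBW (Y0 := R) `[0, 1] (Abar A) (rho01 A x).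
Proof.
move=> _ rangeX finBW.
have [|F [[a [K [fK ->]]] [y [y01 conv_y]]]] := finBW (QItoR R).
  by move=> _ [q _ <-]; apply: QItoR_itv01.
have [|U [nbhsU notsubU]] := @Xset_tail_not_subnbhs R (x a) y _ y01.
  by rewrite -rangeX; exists a.
have [K' [fK' imsubU]] := conv_y U nbhsU.
apply: (notsubU (maxfin (A a `&` (K `|` K')))).
move=> _ [ij ij_tail <-]; apply: imsubU; exists (x a ij) => //.
rewrite setDDl; apply: rho01_setD; first by rewrite finite_setU.
by exists ij.
Qed.
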